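(* Let $G$ be a connected graph on $n$ vertices and let $k$ be an integer with $2\le k\le \operatorname{diam}(G)$. Then \[ b(G^k)\le \left\lceil \sqrt{\frac{4(k-1)}{k^2}\,n}\;\right\rceil. \]
   Context: Graphs are finite, simple, undirected. $G^k$ is the graph on $V(G)$ in which distinct $u,v$ are adjacent iff $d_G(u,v)\le k$. Graph burning: in each round $i$ a vertex (source) is chosen and burned, and simultaneously every unburned neighbour of a vertex burned by the end of round $i-1$ becomes burned; burned vertices stay burned. The burning number $b(G)$ is the minimum number of rounds needed to burn all vertices. *)

From HB Require Import structures.
From mathcomp Require Import all_boot all_order all_algebra.
From mathcomp Require Import reals.
Set Implicit Arguments. Unset Strict Implicit. Unset Printing Implicit Defensive.
Import Order.TTheory GRing.Theory Num.Theory.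

Definition simple_graph (T : finType) (e : rel T) : Prop :=
  symmetric e /\ irreflexive e.

Definition connected_graph (T : finType) (e : rel T) : Prop :=
  forall u v : T, connect e u v.

Fixpoint ball (T : finType) (e : rel T) (k : nat) (u : T) : {set T} :=
  match k with
  | 0 => [set u]
  | k'.+1 => ball e k' u :|: [set y | [exists x in ball e k' u, e x y]]
  end.

(* Graph distance d_G(u,v): the least k with v in ball e k u
   (for a connected graph on #|T| vertices this is < #|T|). *)
Definition dist (T : finType) (e : rel T) (u v : T) : nat :=
  find (fun k => v \in ball e k u) (iota 0 #|T|.+1).

Definition diam (T : finType) (e : rel T) : nat :=
  \max_(u : T) \max_(v : T) dist e u v.

Definition graph_pow (T : finType) (e : rel T) (k : nat) : rel T :=
  fun u v => (u != v) && (v \in ball e k u).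

Definition burn_step (T : finType) (e : rel T) (B : {set T}) (x : T) : {set T} :=
  x |: (B :|: [set y | [exists z in B, e z y]]).

Definition burned (T : finType) (e : rel T) (s : seq T) : {set T} :=
  foldl (burn_step e) set0 s.

(* Burning number: least m such that some m rounds burn every vertex
   (m = #|T| always suffices, so the search range is complete). *)
Definition burning_number (T : finType) (e : rel T) : nat :=
  find (fun m => [exists s : m.-tuple T, burned e s == [set: T]])
       (iota 0 #|T|.+1).

From HB Require Import structures.
From mathcomp Require Import all_boot all_order all_algebra.
From mathcomp Require Import reals.
From mathcomp Require Import zify.
Import Order.TTheory GRing.Theory Num.Theory.
Set Implicit Arguments. Unset Strict Implicit. Unset Printing Implicit Defensive.

(* Root a breadth-first spanning tree of G at some vertex. A parent-closed set U
   of at most sum_(j < m) (k j + 1) vertices is covered by G-balls of radii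
   k (m - 1), ..., k, 0: let v be the ancestor at height k (m - 1) of a deepest
   vertex u of U; the subtree of v lies in the ball of radius k (m - 1) around v
   and meets U in at least k (m - 1) + 1 vertices (the path from u to v), and
   removing it leaves a parent-closed set. A G-ball of radius k j lies in the
   G^k-ball of radius j, which a source lit j rounds before the end burns.
   It remains to see that n <= k^2 m^2 / (4 (k - 1)) implies
   n <= k m (m - 1) / 2 + m: the difference is a positive multiple of
   (k - 2) (k m - 2 (k - 1)), and m >= 2 because diam G >= k forces n > k. *)

Section Ball.
Variables (T : finType) (e : rel T).

Lemma ball_subS j u : ball e j u \subset ball e j.+1 u.
Proof. exact: subsetUl. Qed.

Lemma ball_sub i j u : i <= j -> ball e i u \subset ball e j u.
Proof.
move=> /subnKC <-; elim: (j - i) => [|d IH]; first by rewrite addn0.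
by rewrite addnS (subset_trans IH) ?ball_subS.
Qed.

Lemma mem_ballS j u x y : x \in ball e j u -> e x y -> y \in ball e j.+1 u.
Proof.
by move=> xj exy; rewrite /= !inE; apply/orP; right; apply/existsP; exists x; rewrite xj.
Qed.

Lemma ballSP j u y : y \in ball e j.+1 u ->
  y \in ball e j u \/ exists2 x, x \in ball e j u & e x y.
Proof.
by rewrite /= !inE => /orP[|/existsP[x /andP[xj exy]]]; [left | right; exists x].
Qed.

Lemma ballD_split a b x y : y \in ball e (a + b) x ->
  exists2 z, z \in ball e a x & y \in ball e b z.
Proof.
elim: b y => [|b IH] y; first by rewrite addn0 => ya; exists y; rewrite ?inE.
rewrite addnS => /ballSP[/IH[z za yb] | [w /IH[z za wb] ewy]]; exists z => //.
  exact: (subsetP (ball_subS b z)).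
exact: mem_ballS wb ewy.
Qed.

Lemma connect_ball u v : connect e u v -> exists j, v \in ball e j u.
Proof.
case/connectP=> p pth ->; exists (size p).
elim/last_ind: p pth => [|p x IH] /=; first by rewrite inE.
rewrite rcons_path size_rcons last_rcons => /andP[/IH pj ex].
exact: mem_ballS pj ex.
Qed.

Lemma ball_stable j u : ball e j.+1 u \subset ball e j u ->
  forall i, ball e (i + j) u \subset ball e j u.
Proof.
move=> sSj; elim=> // i IH; apply/subsetP => y /ballSP[/(subsetP IH) // | [x xi exy]].
exact: (subsetP sSj) (mem_ballS (subsetP IH x xi) exy).
Qed.

Lemma card_ball_notin u v j : (exists J, v \in ball e J u) -> v \notin ball e j u ->
  j < #|ball e j u|.
Proof.
move=> [J vJ]; elim: j => [|j IH] vNj; first by rewrite /= cards1.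
have vNj' : v \notin ball e j u by apply: contra vNj; apply: (subsetP (ball_subS _ _)).
have [sSj | nsSj] := boolP (ball e j.+1 u \subset ball e j u).
  have vJj := subsetP (ball_sub u (leq_addr j J)) v vJ.
  by rewrite (subsetP (ball_stable sSj J)) in vNj'.
apply: leq_ltn_trans (IH vNj') (proper_card _).
by rewrite properE ball_subS.
Qed.

End Ball.

Lemma ball_pow (T : finType) (e : rel T) k j x :
  ball e (k * j) x \subset ball (graph_pow e k) j x.
Proof.
elim: j => [|j IH]; first by rewrite muln0.
apply/subsetP => y; rewrite mulnS addnC => /ballD_split[z /(subsetP IH) zj yk].
have [<- | neq_zy] := eqVneq z y; first exact: subsetP (ball_subS _ _ _) _ zj.
by apply: mem_ballS zj _; rewrite /graph_pow neq_zy.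
Qed.

Section Burning.
Variables (T : finType) (e : rel T).

Lemma ball_burn_stepS (B : {set T}) j y x :
  ball e j y \subset B -> ball e j.+1 y \subset burn_step e B x.
Proof.
move=> sjB; apply/subsetP => z /ballSP[/(subsetP sjB) zB | [w /(subsetP sjB) wB ewz]].
  by rewrite !inE zB orbT.
by rewrite !inE; apply/or3P/Or33/existsP; exists w; rewrite wB.
Qed.

Lemma ball_foldl_burn_step (s : seq T) (B : {set T}) j y : ball e j y \subset B ->
  ball e (j + size s) y \subset foldl (burn_step e) B s.
Proof.
elim: s B j => [|x s IH] B j sjB /=; first by rewrite addn0.
by rewrite addnS -addSn; apply/IH/ball_burn_stepS.
Qed.

(* The head of [s] is the earliest source, so it gets the largest radius. *)
Fixpoint ball_cover (r : nat -> nat) (s : seq T) : {set T} :=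
  if s is x :: s' then ball e (r (size s')) x :|: ball_cover r s' else set0.

Lemma ball_cover_burned (s : seq T) : ball_cover id s \subset burned e s.
Proof.
rewrite /burned; elim: s set0 => [|x s IH] B /=; first exact: sub0set.
rewrite subUset IH andbT -[size s]add0n.
by apply: ball_foldl_burn_step; rewrite sub1set !inE eqxx.
Qed.

Lemma burning_number_le m (s : m.-tuple T) : burned e s = [set: T] ->
  burning_number e <= m.
Proof.
move=> burn_s; rewrite /burning_number.
have [m_small | m_large] := ltnP m #|T|.+1; last first.
  by apply: leq_trans (find_size _ _) _; rewrite size_iota.
rewrite leqNgt; apply/negP => /(before_find 0).
rewrite nth_iota // add0n => /negbT/negP; apply; apply/existsP.
by exists s; rewrite burn_s.
Qed.

Lemma diam_lt_card k : connected_graph e -> 0 < k -> k <= diam e -> k < #|T|.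
Proof.
move=> conn k0 kd.
have [u [v kuv]] : exists u v, k <= dist e u v.
  have [/existsP[u /existsP[v kuv]] | Nk] := boolP [exists u, exists v, k <= dist e u v].
    by exists u, v.
  suff : diam e <= k.-1 by lia.
  apply/bigmax_leqP => u _; apply/bigmax_leqP => v _; move: Nk.
  by rewrite negb_exists => /forallP/(_ u); rewrite negb_exists => /forallP/(_ v); lia.
have dist_le : dist e u v <= #|T|.+1.
  by rewrite -(size_iota 0 #|T|.+1) find_size.
have vNk : v \notin ball e k.-1 u.
  apply/negbT; rewrite -[k.-1]add0n -(@nth_iota 0 0 #|T|.+1); last by lia.
  by apply: (@before_find _ 0 (fun j => v \in ball e j u)); move: kuv; rewrite /dist; lia.
have := card_ball_notin (connect_ball (conn u v)) vNk.
have : #|ball e k.-1 u| < #|T|.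
  by rewrite -cardsT proper_card // properT; apply: contraNneq vNk => ->.
lia.
Qed.

End Burning.

Lemma ball_cover_pow (T : finType) (e : rel T) k (s : seq T) :
  ball_cover e (muln k) s \subset ball_cover (graph_pow e k) id s.
Proof. by elim: s => [|x s IH] //=; rewrite setUSS ?ball_pow. Qed.

Section BreadthFirstTree.
Variables (T : finType) (e : rel T) (rho : T).
Hypothesis reach_rho : forall x, exists j, x \in ball e j rho.

Definition depth x := ex_minn (reach_rho x).

Lemma mem_ball_depth x : x \in ball e (depth x) rho.
Proof. by rewrite /depth; case: ex_minnP. Qed.

Lemma depth_min x j : x \in ball e j rho -> depth x <= j.
Proof. by rewrite /depth; case: ex_minnP => n _; apply. Qed.

Definition parent x := odflt x [pick y | (depth y == (depth x).-1) && e y x].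

Lemma parentP x : 0 < depth x -> depth (parent x) = (depth x).-1 /\ e (parent x) x.
Proof.
move=> x0; rewrite /parent; case: pickP => [y /andP[/eqP -> ->] // | Nparent].
have [y yj eyx] : exists2 y, y \in ball e (depth x).-1 rho & e y x.
  have := mem_ball_depth x; rewrite -(ltn_predK x0) => /ballSP[/depth_min | //].
  by rewrite (ltn_predK x0); lia.
suff depth_y : depth y = (depth x).-1 by have := Nparent y; rewrite depth_y eqxx eyx.
apply/anti_leq; rewrite depth_min //=.
have := depth_min (mem_ballS (mem_ball_depth y) eyx); lia.
Qed.

Lemma depth_iter_parent t x : t <= depth x -> depth (iter t parent x) = depth x - t.
Proof.
elim: t => [|t IH] le_t; first by rewrite subn0.
have depth_t := IH (ltnW le_t).
have t_pos : 0 < depth (iter t parent x) by rewrite depth_t; lia.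
by rewrite iterS; have [-> _] := parentP t_pos; rewrite depth_t; lia.
Qed.

Lemma mem_ball_iter_parent t x : t <= depth x -> x \in ball e t (iter t parent x).
Proof.
elim: t x => [|t IH] x le_t; first by rewrite /= inE.
have [depth_p e_px] : depth (parent x) = (depth x).-1 /\ e (parent x) x.
  by apply: parentP; lia.
by rewrite iterSr; apply: mem_ballS e_px; apply: IH; lia.
Qed.

Definition subtree v :=
  [set x | (depth v <= depth x) && (iter (depth x - depth v) parent x == v)].

Lemma subtree_ball v x : x \in subtree v -> x \in ball e (depth x - depth v) v.
Proof.
by rewrite inE => /andP[le_vx /eqP {2}<-]; apply: mem_ball_iter_parent; lia.
Qed.

Lemma subtree_parent v x : 0 < depth x -> parent x \in subtree v -> x \in subtree v.
Proof.
move=> x0; have [depth_p _] := parentP x0; rewrite !inE depth_p => /andP[le_v /eqP iter_v].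
have -> : depth x - depth v = ((depth x).-1 - depth v).+1 by lia.
by rewrite iterSr iter_v eqxx andbT; lia.
Qed.

Definition parent_closed (U : {set T}) :=
  forall x, x \in U -> 0 < depth x -> parent x \in U.

Section ParentClosed.
Variable U : {set T}.
Hypothesis closedU : parent_closed U.

Lemma iter_parent_closed t x : x \in U -> t <= depth x -> iter t parent x \in U.
Proof.
move=> xU; elim: t => [//|t IH] le_t; rewrite iterS closedU ?IH ?(ltnW le_t) //.
by rewrite depth_iter_parent; lia.
Qed.

Lemma parent_closedD v : parent_closed (U :\: subtree v).
Proof.
move=> x; rewrite !in_setD => /andP[xNv xU] x0; rewrite closedU // andbT.
by apply: contra xNv; apply: subtree_parent x0.
Qed.

Lemma card_subtree_iter_parent r u : u \in U -> r <= depth u ->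
  r < #|U :&: subtree (iter r parent u)|.
Proof.
move=> uU le_r; pose chain := [set iter (val t) parent u | t : 'I_r.+1].
have le_depth (t : 'I_r.+1) : val t <= depth u := leq_trans (ltn_ord t : val t <= r) le_r.
have card_chain : #|chain| = r.+1.
  rewrite card_imset ?card_ord // => t1 t2 eq_t; apply/val_inj.
  have := congr1 depth eq_t; rewrite !depth_iter_parent ?le_depth //.
  by have := le_depth t1; have := le_depth t2; move: (val t1) (val t2); lia.
suff : chain \subset U :&: subtree (iter r parent u).
  by move/subset_leq_card; rewrite card_chain.
apply/subsetP => _ /imsetP[t _ ->].
have le_t : t <= r := ltn_ord t.
rewrite !inE iter_parent_closed ?le_depth //= !depth_iter_parent ?le_depth //.
rewrite leq_sub2l //= -iterD; apply/eqP; congr iter.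
by move: (nat_of_ord t) le_t le_r; lia.
Qed.

End ParentClosed.

Lemma parent_closed_ball_cover k m (U : {set T}) : parent_closed U ->
  #|U| <= \sum_(j < m) (k * j).+1 ->
  exists2 s : seq T, size s = m & U \subset ball_cover e (muln k) s.
Proof.
elim: m U => [|m IH] U closedU.
  by rewrite big_ord0 leqn0 cards_eq0 => /eqP ->; exists [::]; rewrite ?sub0set.
rewrite big_ord_recr /= => card_U.
have [shallow | deep] := boolP [forall x in U, depth x <= k * m].
  exists (rho :: nseq m rho); rewrite /= ?size_nseq //.
  apply/subsetP => x xU; rewrite inE (subsetP (ball_sub e rho _) _ (mem_ball_depth x)) //.
  by move/forall_inP: shallow; apply.
have [u0 u0U deep_u0] : exists2 u0, u0 \in U & k * m < depth u0.
  by move: deep; rewrite negb_forall_in => /exists_inP[x xU]; rewrite -ltnNge; exists x.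
have [u uU u_max] := @arg_maxnP T u0 (mem U) depth u0U.
have le_km : k * m <= depth u := ltnW (leq_trans deep_u0 (u_max _ u0U)).
set v := iter (k * m) parent u.
have card_rest : #|U :\: subtree v| <= \sum_(j < m) (k * j).+1.
  have := card_subtree_iter_parent closedU uU le_km; rewrite -/v.
  by have := cardsID (subtree v) U; move: card_U; set S := \sum_(j < m) _; lia.
have closed_rest : parent_closed (U :\: subtree v) by apply: parent_closedD.
have [s size_s cover_rest] := IH _ closed_rest card_rest.
exists (v :: s); rewrite /= ?size_s //.
apply/subsetP => x xU; rewrite inE; have [x_v | xNv] := boolP (x \in subtree v).
  rewrite (subsetP (ball_sub e v _) _ (subtree_ball x_v)) //.
  by rewrite depth_iter_parent //; have := u_max x xU; lia.
by rewrite (subsetP cover_rest) ?orbT // in_setD xNv.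
Qed.

End BreadthFirstTree.

Lemma sum_ball_sizes k m : (\sum_(j < m) (k * j).+1).*2 = k * (m * m.-1) + m.*2.
Proof.
elim: m => [|m IH]; first by rewrite big_ord0 muln0.
rewrite big_ord_recr /= doubleD IH; case: m {IH} => [|m] /=; first by rewrite !muln0.
nia.
Qed.

Lemma sum_ball_sizes_ge k m n : 2 <= k -> k < n -> 4 * (k - 1) * n <= k ^ 2 * m ^ 2 ->
  n <= \sum_(j < m) (k * j).+1.
Proof.
move=> k2 kn hn; rewrite -leq_double sum_ball_sizes.
have m2 : 1 < m.
  rewrite ltnNge; apply/negP => m1; move: hn.
  have : m ^ 2 <= 1 by rewrite -(exp1n 2) leq_exp2r.
  nia.
case: k k2 kn hn => [//|k] k2 kn hn; case: m m2 hn => [//|m] m2 hn /=.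
nia.
Qed.

Lemma burning_number_pow_le (T : finType) (e : rel T) k m :
  connected_graph e -> 2 <= k -> k <= diam e ->
  4 * (k - 1) * #|T| <= k ^ 2 * m ^ 2 -> burning_number (graph_pow e k) <= m.
Proof.
move=> conn k2 kd hm; have kT := diam_lt_card conn (ltnW k2) kd.
have [rho _] : exists rho : T, rho \in [set: T].
  by apply/card_gt0P; rewrite cardsT; lia.
have reach_rho x := connect_ball (conn rho x).
have closedT : parent_closed reach_rho [set: T] by move=> x _ _; rewrite inE.
have card_T : #|[set: T]| <= \sum_(j < m) (k * j).+1.
  by rewrite cardsT; apply: sum_ball_sizes_ge.
have [s /eqP size_s cover_s] := parent_closed_ball_cover closedT card_T.
apply: (burning_number_le (s := Tuple size_s)); apply/eqP.
rewrite eqEsubset subsetT (subset_trans cover_s) //.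
exact: subset_trans (ball_cover_pow _ _ _) (ball_cover_burned _ _).
Qed.

Lemma ceil_sqrt_ge (R : realType) (x : R) : (0 <= x)%R ->
  exists2 m : nat, (Num.ceil (Num.sqrt x) = m%:Z)%R & (x <= (m ^ 2)%:R)%R.
Proof.
move=> x0; have := ceil_ge (Num.sqrt x).
have : (0 <= Num.ceil (Num.sqrt x))%R.
  by rewrite ceil_ge0; apply: lt_le_trans (sqrtr_ge0 x); rewrite ltrN10.
case: (Num.ceil _) => [m _ | //] le_m; exists m => //.
by rewrite -(sqr_sqrtr x0) natrX ler_pXn2r ?nnegrE ?sqrtr_ge0.
Qed.

Theorem mainTheorem6 (R : realType) (T : finType) (e : rel T) (k : nat) :
  simple_graph e -> connected_graph e ->
  2 <= k -> k <= diam e ->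
  ((burning_number (graph_pow e k))%:Z <=
    Num.ceil (Num.sqrt ((4 * (k - 1))%:R / (k ^ 2)%:R * (#|T|)%:R : R)))%R.
Proof.
move=> _ conn k2 kd.
have k2_gt0 : (0 < (k ^ 2)%:R :> R)%R by rewrite ltr0n expn_gt0; case: (k) k2.
have [m -> le_m] := ceil_sqrt_ge (x := ((4 * (k - 1))%:R / (k ^ 2)%:R * (#|T|)%:R : R))
  (mulr_ge0 (divr_ge0 (ler0n _ _) (ler0n _ _)) (ler0n _ _)).
rewrite lez_nat; apply: burning_number_pow_le => //.
by move: le_m; rewrite mulrAC ler_pdivrMr // -!natrM ler_nat (mulnC (m ^ 2)).
Qed.
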